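(* Let $L\ge 2$ and $n_0,\dots,n_L\ge1$ be integers. For $\ell=1,\dots,L$ fix a weight matrix $W_\ell\in\mathbb{R}^{n_\ell\times n_{\ell-1}}$ and a bias $b_\ell\in\mathbb{R}^{n_\ell}$, and let $S_\ell(x)=W_\ell x+b_\ell$. Let $H^{+}_0(s)=0$ for $s<0$ and $H^{+}_0(s)=1$ for $s\ge0$, applied componentwise. Fix an input $x_0\in\mathbb{R}^{n_0}$ and define the quantised features $x_\ell:=H^{+}_0(S_\ell(x_{\ell-1}))$, $\ell=1,\dots,L$. Let $\lambda>0$ be a parameter, and for each $\ell=1,\dots,L$ let $\lambda_\ell=\lambda_\ell(\lambda)>0$ and let $\sigma_{\lambda_\ell}:\mathbb{R}\to\mathbb{R}$ be a function (applied componentwise) such that: (a) $\lambda_\ell\to0$ as $\lambda\to0$; (b) $\sigma_{\lambda_\ell}(s)\to H^{+}_0(s)$ as $\lambda_\ell\to0$, for every $s\in\mathbb{R}$; (c) $\sigma_{\lambda_\ell}$ is strictly increasing; (d) $0\le\sigma_{\lambda_\ell}(s)\le1$ for all $s\in\mathbb{R}$. Define the regularised features $x_{\lambda,0}:=x_0$ and $x_{\lambda,\ell}:=\sigma_{\lambda_\ell}(S_\ell(x_{\lambda,\ell-1}))$, $\ell=1,\dots,L$. Assume moreover that convergence rates $r_\ell$, $\ell=1,\dots,L$, are given such that for every $\varepsilon>0$ and every $\ell=1,\dots,L$: $\sigma_{\lambda_\ell}^{-1}(\varepsilon r_\ell(\lambda))\to0$, $\quad\sigma_{\lambda_\ell}^{-1}(1-\varepsilon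 r_\ell(\lambda))\to0$, $\quad\dfrac{1-\sigma_{\lambda_\ell}(0)}{r_\ell(\lambda)}\to0$ as $\lambda\to0$, and, for $\ell=2,\dots,L$, $\dfrac{r_{\ell-1}(\lambda)}{\sigma_{\lambda_\ell}^{-1}(1-\varepsilon r_\ell(\lambda))}\to0$ as $\lambda\to0$. Then for every $\ell=1,\dots,L$, $\dfrac{\|x_{\lambda,\ell}-x_\ell\|}{r_\ell(\lambda)}\to0$ as $\lambda\to0$.
   Context: A convergence rate is a continuous non-decreasing function $r:[0,\infty)\to[0,\infty)$ with $\lim_{\lambda\to0}r(\lambda)=0$. $\sigma_{\lambda_\ell}^{-1}$ denotes the inverse of the strictly increasing function $\sigma_{\lambda_\ell}$ on its image. $\|\cdot\|$ is the Euclidean norm. *)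

From HB Require Import structures.
From mathcomp Require Import all_boot all_order all_algebra.
From mathcomp Require Import all_classical all_reals all_analysis.
Set Implicit Arguments. Unset Strict Implicit. Unset Printing Implicit Defensive.
Import Order.TTheory GRing.Theory Num.Theory numFieldNormedType.Exports.
Local Open Scope ring_scope.
Local Open Scope classical_set_scope.

Section Defs.
Variable R : realType.

Definition heaviside (s : R) : R := if 0 <= s then 1 else 0.

Definition enorm (m : nat) (v : 'cV[R]_m) : R :=
  Num.sqrt (\sum_(i < m) v i 0 ^+ 2).

(* Inverse of f on its image: the (unique, if f is injective) x with f x = y;
   an arbitrary default (0) outside the image. *)
Definition inv_on (f : R -> R) (y : R) : R := xget 0 [set x | f x = y].

(* Network features.  n l = n_l; W l : 'M_(n_{l+1}, n_l) is the paper's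
   W_{l+1}, b l is the paper's b_{l+1}; act l is the activation of layer l
   (1-based), applied componentwise.  feat n W b x0 act l = x_l. *)
Fixpoint feat (n : nat -> nat) (W : forall l : nat, 'M[R]_(n l.+1, n l))
  (b : forall l : nat, 'cV[R]_(n l.+1)) (x0 : 'cV[R]_(n 0%N))
  (act : nat -> R -> R) (l : nat) : 'cV[R]_(n l) :=
  match l return 'cV[R]_(n l) with
  | 0%N => x0
  | k.+1 => map_mx (act k.+1) (W k *m feat W b x0 act k + b k)
  end.

Definition conv_rate (r : R -> R) : Prop :=
  {within [set x : R | 0 <= x], continuous r} /\
  {in [set x : R | 0 <= x] &, {homo r : x y / x <= y}} /\
  (forall x, 0 <= x -> 0 <= r x) /\
  r x @[x --> 0^'+] --> 0.

End Defs.

From HB Require Import structures.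
From mathcomp Require Import all_boot all_order all_algebra.
From mathcomp Require Import all_classical all_reals all_analysis.
From mathcomp Require Import lra.
Import Order.TTheory GRing.Theory Num.Theory numFieldNormedType.Exports.
Local Open Scope ring_scope.
Local Open Scope classical_set_scope.

(* Induction on the layer, with invariant |x_{lam,l} - x_l| = o(r_l(lam)).
   The pre-activations of layer l+1 of the two networks then differ by
   o(r_l).  A coordinate whose quantised pre-activation s is negative ends up
   below sigma^-1(eps r_{l+1}), so its regularised value is < eps r_{l+1}; if
   s > 0 it ends up above 0, and sigma(0) > 1 - eps r_{l+1}; if s = 0, the
   ratio hypothesis makes the o(r_l) perturbation smaller than
   |sigma^-1(1 - eps r_{l+1})|, so the value again exceeds 1 - eps r_{l+1}.
   Summing over the finitely many coordinates bounds the Euclidean norm. *)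

Lemma inv_onK (R : realType) (f : R -> R) (y : R) :
  y \in range f -> f (inv_on f y) = y.
Proof. by rewrite inE => -[x _ fx]; apply: (@xgetPex _ 0 [set x | f x = y]); exists x. Qed.

Section RatesAlongFilter.
Context {R : realFieldType} {T : Type} {F : set_system T} {FF : Filter F}.

Lemma squeeze_dist_cvgr [t q : T -> R] [s : R] :
  (\forall x \near F, `|t x - s| <= q x) -> q x @[x --> F] --> 0 ->
  t x @[x --> F] --> s.
Proof.
move=> tq q0; apply/cvgrPdistC_le => e e0.
near=> x.
have tqx : `|t x - s| <= q x by near: x.
have qe : `|q x| <= e by near: x; exact: cvgr0_norm_le.
exact: le_trans tqx (le_trans (ler_norm _) qe).
Unshelve. all: by end_near.
Qed.

Lemma ratio_cvg0 (f g : T -> R) :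
  (forall eps, 0 < eps -> \forall x \near F, f x <= eps * g x) ->
  (\forall x \near F, 0 < g x) -> (\forall x \near F, 0 <= f x) ->
  f x / g x @[x --> F] --> 0.
Proof.
move=> fg g0 f0; apply/cvgr0Pnorm_lt => e e0.
have fg_half := fg _ (divr_gt0 e0 (ltr0Sn _ 1)).
near=> x.
have gx : 0 < g x by near: x.
have fx : 0 <= f x by near: x.
have fxg : f x <= e / 2 * g x by near: x.
rewrite ger0_norm ?divr_ge0 ?(ltW gx) // ltr_pdivrMr //.
by apply: le_lt_trans fxg _; rewrite ltr_pM2r //; lra.
Unshelve. all: by end_near.
Qed.

End RatesAlongFilter.

Section EuclideanNorm.
Context {R : realType}.

Lemma enorm0 m : enorm (0 : 'cV[R]_m) = 0.
Proof. by rewrite /enorm big1 ?sqrtr0 // => i _; rewrite mxE expr0n. Qed.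

Lemma enorm_ge0 {m} (v : 'cV[R]_m) : 0 <= enorm v.
Proof. exact: sqrtr_ge0. Qed.

Lemma coord_le_enorm {m} (v : 'cV[R]_m) j : `|v j 0| <= enorm v.
Proof.
rewrite /enorm -sqrtr_sqr ler_sqrt; last by apply: sumr_ge0 => i _; exact: sqr_ge0.
by rewrite (bigD1 j) //= lerDl; apply: sumr_ge0 => i _; exact: sqr_ge0.
Qed.

Lemma enorm_le_coord {m} (v : 'cV[R]_m) e :
  (forall i, `|v i 0| <= e) -> enorm v <= m%:R * e.
Proof.
case: m v => [|m] v ve; first by rewrite /enorm big_ord0 sqrtr0 mul0r.
have e0 : 0 <= e := le_trans (normr_ge0 _) (ve ord0).
rewrite /enorm -(ger0_norm (mulr_ge0 (ler0n _ _) e0)) -sqrtr_sqr ler_sqrt ?sqr_ge0 //.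
apply: le_trans (_ : \sum_(i < m.+1) e ^+ 2 <= _).
  by apply: ler_sum => i _; rewrite -real_normK ?num_real // lerXn2r ?nnegrE.
rewrite sumr_const card_ord exprMn -natrX mulr_natl.
by apply: ler_wpMn2l; rewrite ?sqr_ge0 ?leq_pmull.
Qed.

Lemma affine_coord_lipschitz {p m} (A : 'M[R]_(p, m)) (c : 'cV[R]_p) u v i :
  `|(A *m u + c) i 0 - (A *m v + c) i 0| <= (\sum_j `|A i j|) * enorm (u - v).
Proof.
have -> : (A *m u + c) i 0 - (A *m v + c) i 0 = (A *m (u - v)) i 0.
  by rewrite mulmxBr !mxE; lra.
rewrite mxE mulr_suml.
apply: le_trans (ler_norm_sum _ _ _) _.
by apply: ler_sum => j _; rewrite normrM ler_wpM2l ?coord_le_enorm.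
Qed.

End EuclideanNorm.

Section RegularisedHeaviside.
Variable R : realType.
Variables (sg : R -> R -> R) (rho : R -> R).
Hypothesis sg_homo : forall la, 0 < la -> {homo sg la : x y / x < y}.
Hypothesis sg_bound : forall la, 0 < la -> forall s, 0 <= sg la s <= 1.
Hypothesis rho_gt0 : \forall la \near 0^'+, 0 < rho la.
Hypothesis sg_range : forall eps, 0 < eps -> \forall la \near 0^'+,
  eps * rho la \in range (sg la) /\ 1 - eps * rho la \in range (sg la).
Hypothesis inv_sg_small_cvg0 : forall eps, 0 < eps ->
  inv_on (sg la) (eps * rho la) @[la --> 0^'+] --> 0.
Hypothesis sg0_rate : (1 - sg la 0) / rho la @[la --> 0^'+] --> 0.

Lemma sg0_near1 eps : 0 < eps -> \forall la \near 0^'+, 1 - eps * rho la < sg la 0.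
Proof.
move=> eps0; near=> la.
have rho_la : 0 < rho la by near: la.
have : (1 - sg la 0) / rho la < eps by near: la; exact: cvgr_lt sg0_rate _ eps0.
by rewrite ltr_pdivrMr // mulrC; lra.
Unshelve. all: by end_near.
Qed.

Lemma sg_rate_neg (t : R -> R) (s : R) : s < 0 -> t la @[la --> 0^'+] --> s ->
  forall eps, 0 < eps ->
  \forall la \near 0^'+, `|sg la (t la) - heaviside s| <= eps * rho la.
Proof.
move=> s_lt0 ts eps eps0.
have s2 : s < s / 2 by lra.
have s20 : s / 2 < 0 by lra.
near=> la.
have la0 : 0 < la by near: la; exact: nbhs_right_gt.
have [rg _] : eps * rho la \in range (sg la) /\ 1 - eps * rho la \in range (sg la).
  by near: la; exact: sg_range.
have t_lt : t la < s / 2 by near: la; exact: cvgr_lt ts _ s2.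
have inv_gt : s / 2 < inv_on (sg la) (eps * rho la).
  by near: la; exact: cvgr_gt (inv_sg_small_cvg0 _ eps0) _ s20.
have := sg_homo _ la0 _ _ (lt_trans t_lt inv_gt); rewrite inv_onK //.
have /andP[sg_ge0 _] := sg_bound _ la0 (t la).
by rewrite /heaviside (leNgt 0 s) s_lt0 subr0 ger0_norm // => /ltW.
Unshelve. all: by end_near.
Qed.

Lemma sg_rate_pos (t : R -> R) (s : R) : 0 < s -> t la @[la --> 0^'+] --> s ->
  forall eps, 0 < eps ->
  \forall la \near 0^'+, `|sg la (t la) - heaviside s| <= eps * rho la.
Proof.
move=> s_gt0 ts eps eps0.
near=> la.
have la0 : 0 < la by near: la; exact: nbhs_right_gt.
have t_gt0 : 0 < t la by near: la; exact: cvgr_gt ts _ s_gt0.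
have sg0 : 1 - eps * rho la < sg la 0 by near: la; exact: sg0_near1.
have := sg_homo _ la0 _ _ t_gt0.
have /andP[_ sg_le1] := sg_bound _ la0 (t la).
rewrite /heaviside (ltW s_gt0) ler0_norm ?subr_le0 //; lra.
Unshelve. all: by end_near.
Qed.

Lemma sg_rate_zero (t q : R -> R) :
  (\forall la \near 0^'+, `|t la| <= q la) ->
  (forall eps, 0 < eps ->
     q la / inv_on (sg la) (1 - eps * rho la) @[la --> 0^'+] --> 0) ->
  forall eps, 0 < eps ->
  \forall la \near 0^'+, `|sg la (t la) - heaviside 0| <= eps * rho la.
Proof.
move=> tq q_inv eps eps0.
near=> la.
have la0 : 0 < la by near: la; exact: nbhs_right_gt.
have [_ rg] : eps * rho la \in range (sg la) /\ 1 - eps * rho la \in range (sg la).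
  by near: la; exact: sg_range.
have sg0 : 1 - eps * rho la < sg la 0 by near: la; exact: sg0_near1.
have t_q : `|t la| <= q la by near: la.
have : -1 < q la / inv_on (sg la) (1 - eps * rho la).
  by near: la; exact: cvgr_gt (q_inv _ eps0) _ (ltrN10 R).
set m := inv_on (sg la) (1 - eps * rho la).
have sg_m : sg la m = 1 - eps * rho la by rewrite inv_onK.
have m_lt0 : m < 0 by rewrite -(leW_mono (le_mono (sg_homo _ la0))) sg_m.
rewrite ltr_ndivlMr // mulN1r => q_lt.
have t_gt_m : m < t la by case/ler_normlP: t_q; lra.
have := sg_homo _ la0 _ _ t_gt_m; rewrite sg_m.
have /andP[_ sg_le1] := sg_bound _ la0 (t la).
rewrite /heaviside lexx ler0_norm ?subr_le0 //; lra.
Unshelve. all: by end_near.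
Qed.

Lemma sg_heaviside_rate [t q : R -> R] [s : R] :
  (\forall la \near 0^'+, `|t la - s| <= q la) -> q la @[la --> 0^'+] --> 0 ->
  (forall eps, 0 < eps ->
     q la / inv_on (sg la) (1 - eps * rho la) @[la --> 0^'+] --> 0) ->
  forall eps, 0 < eps ->
  \forall la \near 0^'+, `|sg la (t la) - heaviside s| <= eps * rho la.
Proof.
move=> tq q0 q_inv; case: (ltgtP s 0) => [s_lt0|s_gt0|s0].
- exact: sg_rate_neg _ _ s_lt0 (squeeze_dist_cvgr tq q0).
- exact: sg_rate_pos _ _ s_gt0 (squeeze_dist_cvgr tq q0).
- rewrite s0; apply: sg_rate_zero q_inv.
  by move: tq; rewrite s0; apply: filterS => la; rewrite subr0.
Qed.

Lemma layer_rate p m (A : 'M[R]_(p, m)) (c : 'cV[R]_p) (u : R -> 'cV[R]_m)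
    (v : 'cV[R]_m) (q : R -> R) : (0 < p)%N ->
  (forall eta, 0 < eta -> \forall la \near 0^'+, enorm (u la - v) <= eta * q la) ->
  q la @[la --> 0^'+] --> 0 ->
  (forall eps, 0 < eps ->
     q la / inv_on (sg la) (1 - eps * rho la) @[la --> 0^'+] --> 0) ->
  forall eps, 0 < eps -> \forall la \near 0^'+,
    enorm (map_mx (sg la) (A *m u la + c) - map_mx (@heaviside R) (A *m v + c))
      <= eps * rho la.
Proof.
move=> p_gt0 uv q0 q_inv eps eps0.
have pre_near i :
    \forall la \near 0^'+, `|(A *m u la + c) i 0 - (A *m v + c) i 0| <= q la.
  set C := \sum_j `|A i j|.
  have C0 : 0 <= C by rewrite sumr_ge0.
  have C1 : 0 < (C + 1)^-1 by rewrite invr_gt0; lra.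
  near=> la.
  have uv_la : enorm (u la - v) <= (C + 1)^-1 * q la by near: la; exact: uv.
  have q_ge0 : 0 <= q la by rewrite -(pmulr_rge0 _ C1) (le_trans (enorm_ge0 _) uv_la).
  apply: le_trans (affine_coord_lipschitz A c (u la) v i) _.
  apply: le_trans (ler_wpM2l C0 uv_la) _.
  by rewrite mulrA ler_piMl // ler_pdivrMr; lra.
have p0 : 0 < p%:R :> R by rewrite ltr0n.
have coords : \forall la \near 0^'+, forall i,
    `|(map_mx (sg la) (A *m u la + c) - map_mx (@heaviside R) (A *m v + c)) i 0|
      <= eps / p%:R * rho la.
  apply: filter_forall => i.
  have := sg_heaviside_rate (pre_near i) q0 q_inv _ (divr_gt0 eps0 p0); apply: filterS => la.
  by rewrite !mxE.
move: coords; apply: filterS => la /enorm_le_coord /le_trans; apply.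
by rewrite mulrA mulrCA divff ?mulr1 // gt_eqF.
Unshelve. all: by end_near.
Qed.

End RegularisedHeaviside.

Theorem theorem1 (R : realType) (L : nat) (n : nat -> nat)
  (W : forall l : nat, 'M[R]_(n l.+1, n l)) (b : forall l : nat, 'cV[R]_(n l.+1))
  (x0 : 'cV[R]_(n 0%N))
  (lam : nat -> R -> R) (sigma : R -> R -> R) (r : nat -> R -> R) :
  (2 <= L)%N ->
  (forall l, (l <= L)%N -> (1 <= n l)%N) ->
  (* lambda_l(lambda) > 0 *)
  (forall l, (1 <= l <= L)%N -> forall la : R, 0 < la -> 0 < lam l la) ->
  (* (a) *)
  (forall l, (1 <= l <= L)%N -> lam l la @[la --> 0^'+] --> 0) ->
  (* (b) *)
  (forall s : R, sigma mu s @[mu --> 0^'+] --> heaviside s) ->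
  (* (c) *)
  (forall l, (1 <= l <= L)%N -> forall la : R, 0 < la ->
     {homo sigma (lam l la) : x y / x < y}) ->
  (* (d) *)
  (forall l, (1 <= l <= L)%N -> forall la : R, 0 < la ->
     forall s, 0 <= sigma (lam l la) s <= 1) ->
  (* convergence rates (positive near 0, so that the quotients make sense) *)
  (forall l, (1 <= l <= L)%N -> conv_rate (r l)) ->
  (forall l, (1 <= l <= L)%N -> \forall la \near 0^'+, 0 < r l la) ->
  (* the arguments of sigma^{-1} lie in the image of sigma (near 0) *)
  (forall l, (1 <= l <= L)%N -> forall eps : R, 0 < eps ->
     \forall la \near 0^'+,
       (eps * r l la) \in range (sigma (lam l la)) /\
       (1 - eps * r l la) \in range (sigma (lam l la))) ->
  (forall l, (1 <= l <= L)%N -> forall eps : R, 0 < eps ->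
     inv_on (sigma (lam l la)) (eps * r l la) @[la --> 0^'+] --> 0) ->
  (forall l, (1 <= l <= L)%N -> forall eps : R, 0 < eps ->
     inv_on (sigma (lam l la)) (1 - eps * r l la) @[la --> 0^'+] --> 0) ->
  (forall l, (1 <= l <= L)%N ->
     (1 - sigma (lam l la) 0) / r l la @[la --> 0^'+] --> 0) ->
  (forall l, (2 <= l <= L)%N -> forall eps : R, 0 < eps ->
     r l.-1 la / inv_on (sigma (lam l la)) (1 - eps * r l la)
       @[la --> 0^'+] --> 0) ->
  forall l, (1 <= l <= L)%N ->
    enorm (feat W b x0 (fun k => sigma (lam k la)) l
           - feat W b x0 (fun _ => @heaviside R) l) / r l la
      @[la --> 0^'+] --> 0.
Proof.
move=> _ n_gt0 _ _ _ sg_homo sg_bound r_rate r_gt0 sg_range inv_small _ sg0_rate r_ratio.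
pose Fs la := feat W b x0 (fun k => sigma (lam k la)).
pose Fh := feat W b x0 (fun _ => @heaviside R).
have layer k (kL : (k < L)%N) q := @layer_rate R (fun la => sigma (lam k.+1 la))
  (r k.+1) (sg_homo k.+1 kL) (sg_bound k.+1 kL) (r_gt0 k.+1 kL) (sg_range k.+1 kL)
  (inv_small k.+1 kL) (sg0_rate k.+1 kL) _ _ (W k) (b k) (Fs^~ k) (Fh k) q
  (n_gt0 k.+1 kL).
have small l : (1 <= l <= L)%N -> forall eps, 0 < eps ->
    \forall la \near 0^'+, enorm (Fs la l - Fh l) <= eps * r l la.
  elim: l => [//|[|k] IH] /andP[_ kL].
  - apply: (layer _ kL (fun=> 0)) => [eta _||eps _].
    + by apply: nearW => la; rewrite subrr enorm0 mulr0.
    + exact: cvg_cst.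
    + by under eq_fun do rewrite mul0r; exact: cvg_cst.
  - have kr : (1 <= k.+1 <= L)%N by rewrite (ltnW kL).
    have [_ [_ [_ r_cvg0]]] := r_rate _ kr.
    exact: layer _ kL _ (IH kr) r_cvg0 (r_ratio k.+2 kL).
move=> l lr; apply: ratio_cvg0 (small l lr) (r_gt0 l lr) _.
exact: nearW (fun la => enorm_ge0 _).
Qed.
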